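(* Let $n\in\mathbb{N}$, $x,y\in(0,1)$ with $x\ne y$, $z=\tfrac{x+y}{2}$, and for $k=0,1,\dots,2n$ put \[ d_k=\tfrac12\Bigl[\tbinom{2n}{k}x^k(1-x)^{2n-k}+\tbinom{2n}{k}y^k(1-y)^{2n-k}\Bigr]-\tbinom{2n}{k}z^k(1-z)^{2n-k}. \] Then there exist real numbers $0<t_1<t_2<2n$ such that $d_k>0$ for integers $0\le k<t_1$, $d_k<0$ for integers $t_1<k<t_2$, and $d_k>0$ for integers $t_2<k\le 2n$ (with at least one integer $k$ satisfying $d_k<0$). *)

From Stdlib Require Import Reals Lra.
Open Scope R_scope.

Definition bin_pmf (m k : nat) (p : R) : R :=
  C m k * p ^ k * (1 - p) ^ (m - k).

Definition dk (n : nat) (x y : R) (k : nat) : R :=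
  / 2 * (bin_pmf (2 * n) k x + bin_pmf (2 * n) k y)
  - bin_pmf (2 * n) k ((x + y) / 2).

(* Dividing d_k by the positive binomial weight b_k(z) leaves (r_x(k) + r_y(k))/2 - 1,
   where r_w(k) = (w/z)^k ((1-w)/(1-z))^(2n-k) is a geometric sequence with ratio
   different from 1, hence strictly convex in k.  At both ends this is positive, since
   a^m + b^m > 2 when a + b = 2, a <> b and m >= 2; and the d_k sum to 0, so some d_k is
   negative.  A strictly convex sequence is negative strictly between any two indices where
   it is nonpositive, and this property survives multiplication by positive weights; it
   forces the sign pattern + - + on the d_k. *)

From Stdlib Require Import Reals Lra Lia Wf_nat.
Open Scope R_scope.

Definition strictly_convex (h : nat -> R) (m : nat) : Prop :=
  forall k, (S (S k) <= m)%nat -> 2 * h (S k) < h k + h (S (S k)).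

Definition negative_between (h : nat -> R) (m : nat) : Prop :=
  forall i j k, (i < j)%nat -> (j < k)%nat -> (k <= m)%nat ->
  h i <= 0 -> h k <= 0 -> h j < 0.

Section StrictlyConvex.

Variables (h : nat -> R) (m : nat).
Hypothesis h_convex : strictly_convex h m.

Lemma strictly_convex_incr_step i j :
  (i < j)%nat -> (j < m)%nat -> h i <= h j -> h j < h (S j).
Proof.
  induction j as [|j IH]; intros Hij Hjm Hh; [lia|].
  pose proof (h_convex j Hjm).
  destruct (Rle_dec (h j) (h (S j))) as [Hle|Hgt]; [lra|].
  assert (Hij' : (i < j)%nat) by (destruct (Nat.eq_dec i j); [subst; lra | lia]).
  pose proof (IH Hij' ltac:(lia) ltac:(lra)); lra.
Qed.

Lemma strictly_convex_incr i j k :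
  (i < j)%nat -> (j < k)%nat -> (k <= m)%nat -> h i <= h j -> h j < h k.
Proof.
  intros Hij Hjk Hkm Hh; induction k as [|k IH]; [lia|].
  destruct (Nat.eq_dec j k) as [<-|Hjk'].
  - exact (strictly_convex_incr_step i j Hij ltac:(lia) Hh).
  - pose proof (IH ltac:(lia) ltac:(lia)).
    pose proof (strictly_convex_incr_step j k ltac:(lia) ltac:(lia) ltac:(lra)); lra.
Qed.

Lemma strictly_convex_negative_between : negative_between h m.
Proof.
  intros i j k Hij Hjk Hkm Hi Hk.
  destruct (Rlt_dec (h j) 0) as [|Hj]; [assumption|].
  pose proof (strictly_convex_incr i j k Hij Hjk Hkm ltac:(lra)); lra.
Qed.

End StrictlyConvex.

Lemma strictly_convex_geom (p q : R) (m : nat) :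
  0 < p -> 0 < q -> p <> q -> strictly_convex (fun k => p ^ k * q ^ (m - k)) m.
Proof.
  intros Hp Hq Hpq k Hk.
  replace (m - k)%nat with (m - S (S k) + 2)%nat by lia.
  replace (m - S k)%nat with (m - S (S k) + 1)%nat by lia.
  set (j := (m - S (S k))%nat).
  assert (Hsq : 0 < (p - q) ^ 2) by (destruct (Rtotal_order p q) as [|[|]]; nra).
  assert (Hpos : 0 < p ^ k * q ^ j * (p - q) ^ 2)
    by (apply Rmult_lt_0_compat; [apply Rmult_lt_0_compat; apply pow_lt |]; assumption).
  assert (p ^ k * q ^ (j + 2) + p ^ S (S k) * q ^ j - 2 * (p ^ S k * q ^ (j + 1))
          = p ^ k * q ^ j * (p - q) ^ 2) by (rewrite !pow_add; simpl; ring).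
  lra.
Qed.

Lemma strictly_convex_mean (f g : nat -> R) (m : nat) :
  strictly_convex f m -> strictly_convex g m ->
  strictly_convex (fun k => (f k + g k) / 2 - 1) m.
Proof. intros Hf Hg k Hk; pose proof (Hf k Hk); pose proof (Hg k Hk); lra. Qed.

Lemma negative_between_closed (h : nat -> R) (m i j k : nat) :
  negative_between h m -> (i <= j)%nat -> (j <= k)%nat -> (k <= m)%nat ->
  h i < 0 -> h k < 0 -> h j < 0.
Proof.
  intros Hh Hij Hjk Hkm Hi Hk.
  destruct (Nat.eq_dec i j) as [<-|]; [assumption|].
  destruct (Nat.eq_dec j k) as [->|]; [assumption|].
  apply (Hh i j k); lia || lra.
Qed.

Lemma negative_between_rev (h : nat -> R) (m : nat) :
  negative_between h m -> negative_between (fun k => h (m - k)%nat) m.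
Proof.
  intros Hh i j k Hij Hjk Hkm Hi Hk.
  apply (Hh (m - k)%nat _ (m - i)%nat); lia || assumption.
Qed.

Lemma negative_between_mul (w h : nat -> R) (m : nat) :
  (forall k, (k <= m)%nat -> 0 < w k) -> negative_between h m ->
  negative_between (fun k => w k * h k) m.
Proof.
  intros Hw Hh i j k Hij Hjk Hkm Hi Hk.
  pose proof (Hw i ltac:(lia)); pose proof (Hw j ltac:(lia)); pose proof (Hw k ltac:(lia)).
  assert (h i <= 0) by nra; assert (h k <= 0) by nra.
  pose proof (Hh i j k Hij Hjk Hkm ltac:(assumption) ltac:(assumption)); nra.
Qed.

Lemma negative_between_first_cut (h : nat -> R) (m j : nat) :
  negative_between h m -> 0 < h 0%nat -> (j <= m)%nat -> h j < 0 ->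
  exists a t, (a <= j)%nat /\ h a < 0 /\ INR a - 1 <= t < INR a /\ 0 < t /\
    (forall k, INR k < t -> 0 < h k).
Proof.
  intros Hh H0 Hjm Hj.
  destruct (dec_inh_nat_subset_has_unique_least_element (fun k => h k < 0))
    as [a [[Ha Hmin] _]].
  { intros k; destruct (Rlt_dec (h k) 0); auto. }
  { exists j; exact Hj. }
  assert (Haj : (a <= j)%nat) by exact (Hmin j Hj).
  assert (Hnonneg : forall k, (k < a)%nat -> 0 <= h k).
  { intros k Hk; destruct (Rle_dec 0 (h k)) as [|Hk']; [assumption|].
    pose proof (Hmin k ltac:(lra)); lia. }
  destruct a as [|a]; [lra|].
  assert (Hpos : forall k, (k < a)%nat -> 0 < h k).
  { intros k Hk; destruct (Rlt_dec 0 (h k)) as [|Hk']; [assumption|].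
    pose proof (Hnonneg a ltac:(lia)).
    pose proof (Hh k a (S a) Hk ltac:(lia) ltac:(lia) ltac:(lra) ltac:(lra)); lra. }
  pose proof (pos_INR a).
  destruct (Rlt_dec 0 (h a)) as [Ha0|Ha0].
  - exists (S a), (INR a + / 2); rewrite S_INR; repeat split; try lra; try assumption.
    intros k Hk.
    assert (Hka : (k < S a)%nat) by (apply INR_lt; rewrite S_INR; lra).
    destruct (Nat.eq_dec k a) as [->|]; [assumption | apply Hpos; lia].
  - (* h a = 0 forces the cut to be exactly at a *)
    destruct a as [|a]; [lra|].
    assert (0 < INR (S a)) by apply lt_0_INR, Nat.lt_0_succ.
    exists (S (S a)), (INR (S a)); rewrite (S_INR (S a)).
    repeat split; try lra; try assumption.
    intros k Hk; apply Hpos, INR_lt, Hk.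
Qed.

Lemma negative_between_sign_pattern (h : nat -> R) (m j : nat) :
  negative_between h m -> 0 < h 0%nat -> 0 < h m -> (j <= m)%nat -> h j < 0 ->
  exists t1 t2, 0 < t1 /\ t1 < t2 /\ t2 < INR m /\
    (forall k, INR k < t1 -> h k > 0) /\
    (forall k, t1 < INR k < t2 -> h k < 0) /\
    (forall k, t2 < INR k -> (k <= m)%nat -> h k > 0) /\
    (exists k, t1 < INR k < t2).
Proof.
  intros Hh H0 Hm Hjm Hj.
  destruct (negative_between_first_cut h m j Hh H0 Hjm Hj)
    as (a & t1 & Haj & Ha & Ht1 & Ht1pos & Hleft).
  destruct (negative_between_first_cut (fun k => h (m - k)%nat) m (m - j))
    as (a' & t & Ha'j & Hb & Ht & Htpos & Hright).
  - apply negative_between_rev, Hh.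
  - rewrite Nat.sub_0_r; exact Hm.
  - lia.
  - replace (m - (m - j))%nat with j by lia; exact Hj.
  - cbn beta in Hb, Hright.
    assert (Hab : INR a <= INR (m - a')) by (apply le_INR; lia).
    rewrite minus_INR in Hab by lia.
    exists t1, (INR m - t); repeat split; try lra.
    + exact Hleft.
    + intros k [Hk1 Hk2].
      apply (negative_between_closed h m a k (m - a')); try assumption; try lia.
      * apply Nat.lt_succ_r, INR_lt; rewrite S_INR; lra.
      * apply Nat.lt_succ_r, INR_lt; rewrite S_INR, minus_INR by lia; lra.
    + intros k Hk Hkm.
      specialize (Hright (m - k)%nat); rewrite minus_INR in Hright by exact Hkm.
      replace (m - (m - k))%nat with k in Hright by lia.
      apply Hright; lra.
    + exists a; split; lra.
Qed.

Lemma pow_add_gt2 (a b : R) (m : nat) :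
  0 < a -> 0 < b -> a + b = 2 -> a <> b -> (2 <= m)%nat -> 2 < a ^ m + b ^ m.
Proof.
  intros Ha Hb Hab Hne Hm; induction Hm as [|m Hm IH].
  - assert (0 < (a - b) ^ 2) by (destruct (Rtotal_order a b) as [|[|]]; nra).
    simpl; nra.
  - (* a^(m+1) + b^(m+1) - (a^m + b^m) = (a - b) (a^m - b^m) / 2 >= 0 *)
    assert (0 <= (a - b) * (a ^ m - b ^ m)).
    { destruct (Rle_dec a b).
      - pose proof (pow_incr a b m ltac:(lra)); nra.
      - pose proof (pow_incr b a m ltac:(lra)); nra. }
    simpl; nra.
Qed.

Lemma exists_neg_term (f : nat -> R) (N : nat) :
  sum_f_R0 f N <= 0 -> 0 < f 0%nat -> exists j, (j <= N)%nat /\ f j < 0.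
Proof.
  intros Hsum H0; induction N as [|N IH]; simpl in Hsum; [lra|].
  destruct (Rlt_dec (f (S N)) 0) as [Hneg|Hnneg].
  - exists (S N); split; [lia | exact Hneg].
  - destruct (IH ltac:(lra)) as (j & Hj & Hfj); exists j; split; [lia | exact Hfj].
Qed.

Lemma pow_ratio_mean_gt1 (u v c : R) (m : nat) :
  0 < u -> 0 < v -> u + v = 2 * c -> u <> v -> (2 <= m)%nat ->
  1 < ((u / c) ^ m + (v / c) ^ m) / 2.
Proof.
  intros Hu Hv Hc Huv Hm.
  assert (Hc0 : 0 < c) by lra.
  enough (2 < (u / c) ^ m + (v / c) ^ m) by lra.
  apply pow_add_gt2; try assumption; try (apply Rdiv_lt_0_compat; assumption).
  - replace (u / c + v / c) with ((u + v) / c) by (field; lra).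
    rewrite Hc; field; lra.
  - intros E; apply Huv; unfold Rdiv in E.
    apply Rmult_eq_reg_r in E; [exact E | apply Rinv_neq_0_compat; lra].
Qed.

Lemma bin_pmf_pos (m k : nat) (p : R) : 0 < p < 1 -> 0 < bin_pmf m k p.
Proof.
  intros Hp; unfold bin_pmf, C.
  apply Rmult_lt_0_compat; [apply Rmult_lt_0_compat|]; try (apply pow_lt; lra).
  apply Rdiv_lt_0_compat; [|apply Rmult_lt_0_compat]; apply INR_fact_lt_0.
Qed.

Lemma bin_pmf_sum (m : nat) (p : R) : sum_f_R0 (fun k => bin_pmf m k p) m = 1.
Proof.
  unfold bin_pmf; rewrite <- binomial.
  replace (p + (1 - p)) with 1 by ring; apply pow1.
Qed.

Lemma dk_sum (n : nat) (x y : R) : sum_f_R0 (dk n x y) (2 * n) = 0.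
Proof.
  unfold dk; rewrite minus_sum.
  erewrite sum_eq by (intros; apply Rmult_comm).
  rewrite <- scal_sum, plus_sum, !bin_pmf_sum; field.
Qed.

Definition bin_ratio (m k : nat) (w z : R) : R :=
  (w / z) ^ k * ((1 - w) / (1 - z)) ^ (m - k).

Lemma bin_pmf_ratio (m k : nat) (w z : R) :
  0 < z < 1 -> bin_pmf m k w = bin_pmf m k z * bin_ratio m k w z.
Proof.
  intros Hz; unfold bin_pmf, bin_ratio, Rdiv.
  rewrite !Rpow_mult_distr, !pow_inv.
  field; split; apply pow_nonzero; lra.
Qed.

Lemma strictly_convex_bin_ratio (m : nat) (w z : R) :
  0 < w < 1 -> 0 < z < 1 -> w <> z -> strictly_convex (fun k => bin_ratio m k w z) m.
Proof.
  intros Hw Hz Hwz; apply strictly_convex_geom;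
    try (apply Rdiv_lt_0_compat; lra).
  intros E; apply Hwz.
  assert (w = z * (w / z)) by (field; lra).
  assert (1 - w = (1 - z) * ((1 - w) / (1 - z))) by (field; lra).
  rewrite E in *; nra.
Qed.

Theorem mainTheorem4 (n : nat) (x y : R)
  (hn : (1 <= n)%nat)
  (hx : 0 < x < 1) (hy : 0 < y < 1) (hxy : x <> y) :
  exists t1 t2 : R,
    0 < t1 /\ t1 < t2 /\ t2 < INR (2 * n) /\
    (forall k : nat, INR k < t1 -> dk n x y k > 0) /\
    (forall k : nat, t1 < INR k < t2 -> dk n x y k < 0) /\
    (forall k : nat, t2 < INR k -> (k <= 2 * n)%nat -> dk n x y k > 0) /\
    (exists k : nat, t1 < INR k < t2).
Proof.
  set (m := (2 * n)%nat); set (z := (x + y) / 2).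
  assert (Hz : 0 < z < 1) by (unfold z; lra).
  assert (Hm : (2 <= m)%nat) by (unfold m; lia).
  set (r := fun k => (bin_ratio m k x z + bin_ratio m k y z) / 2 - 1).
  assert (Hdk : forall k, dk n x y k = bin_pmf m k z * r k).
  { intros k; unfold dk, r; fold m z.
    rewrite (bin_pmf_ratio m k x z Hz), (bin_pmf_ratio m k y z Hz); field. }
  assert (Hbetween : negative_between (dk n x y) m).
  { intros i j k Hij Hjk Hkm; rewrite !Hdk.
    apply (negative_between_mul (fun k => bin_pmf m k z) r m); try assumption.
    - intros l _; apply bin_pmf_pos, Hz.
    - apply strictly_convex_negative_between, strictly_convex_mean;
        apply strictly_convex_bin_ratio; unfold z; lra. }
  assert (H0 : 0 < dk n x y 0%nat).
  { rewrite Hdk; apply Rmult_lt_0_compat; [apply bin_pmf_pos, Hz|].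
    unfold r, bin_ratio; rewrite Nat.sub_0_r, !pow_O, !Rmult_1_l.
    assert (1 < (((1 - x) / (1 - z)) ^ m + ((1 - y) / (1 - z)) ^ m) / 2)
      by (apply pow_ratio_mean_gt1; unfold z; lra || assumption).
    lra. }
  assert (Hm0 : 0 < dk n x y m).
  { rewrite Hdk; apply Rmult_lt_0_compat; [apply bin_pmf_pos, Hz|].
    unfold r, bin_ratio; rewrite Nat.sub_diag, !pow_O, !Rmult_1_r.
    assert (1 < ((x / z) ^ m + (y / z) ^ m) / 2)
      by (apply pow_ratio_mean_gt1; unfold z; lra || assumption).
    lra. }
  destruct (exists_neg_term (dk n x y) m ltac:(rewrite dk_sum; lra) H0) as (j & Hj & Hdj).
  exact (negative_between_sign_pattern (dk n x y) m j Hbetween H0 Hm0 Hj Hdj).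
Qed.
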